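(* Let $\Sigma$ be a first-order language containing an $m$-ary predicate symbol for some $m\ge 2$, or an $n$-ary function symbol for some $n\ge 1$, and let $\mathcal{T}_\Sigma$ be the family of all complete theories in $\Sigma$. Then ${\rm RS}(\mathcal{T}_\Sigma)=\infty$.
   Context: Theories are complete consistent first-order theories; structures have nonempty universes. If $\Sigma$ is relational, $\mathcal{T}_\Sigma$ is the family of all complete theories of $\Sigma$-structures. If $\Sigma$ contains function symbols (constants being $0$-ary function symbols), each $n$-ary function symbol $f$ is replaced by an $(n+1)$-ary predicate symbol $R_f$ interpreted as the graph $\{(\bar a,b)\mid f(\bar a)=b\}$, and $\mathcal{T}_\Sigma$ is the family of all complete theories of $\Sigma$-structures viewed in this relational language. For a family $\mathcal{T}$ of theories and a sentence $\varphi$ of its language, $\mathcal{T}_\varphi=\{T\in\mathcal{T}\mid\varphi\in T\}$. The rank ${\rm RS}$ of a family is defined as follows: ${\rm RS}(\emptyset)=-1$; ${\rm RS}(\mathcal{T})=0$ for finite nonempty $\mathcal{T}$; ${\rm RS}(\mathcal{T})\ge 1$ for infinite $\mathcal{T}$; for $\alpha=\beta+1$, ${\rm RS}(\mathcal{T})\ge\alpha$ iff there are pairwise inconsistent sentences $\varphi_n$, $n\in\omega$, of the language of $\mathcal{T}$ with ${\rm RS}(\mathcal{T}_{\varphi_n})\ge\beta$ for all $n$; for limit $\alpha$, ${\rm RS}(\mathcal{T})\ge\alpha$ iff ${\rm RS}(\mathcal{T})\ge\beta$ for all $\beta<\alpha$; ${\rm RS}(\mathcal{T})=\alpha$ iff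 ${\rm RS}(\mathcal{T})\ge\alpha$ and not ${\rm RS}(\mathcal{T})\ge\alpha+1$; ${\rm RS}(\mathcal{T})=\infty$ if ${\rm RS}(\mathcal{T})\ge\alpha$ for every ordinal $\alpha$. *)

From mathcomp Require Import all_boot.
From Stdlib Require Import List.

Set Implicit Arguments.
Unset Strict Implicit.
Unset Printing Implicit Defensive.

Inductive form (S : Type) (ar : S -> nat) : Type :=
  | FEq  : nat -> nat -> form ar
  | FRel : forall s : S, ('I_(ar s) -> nat) -> form ar
  | FNot : form ar -> form ar
  | FAnd : form ar -> form ar -> form ar
  | FEx  : nat -> form ar -> form ar.

Arguments FEq {S ar}.
Arguments FRel {S ar}.
Arguments FNot {S ar}.
Arguments FAnd {S ar}.
Arguments FEx {S ar}.

Fixpoint free (S : Type) (ar : S -> nat) (x : nat) (phi : form ar) : Prop :=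
  match phi with
  | FEq a b => x = a \/ x = b
  | FRel _ v => exists i, v i = x
  | FNot p => free x p
  | FAnd p q => free x p \/ free x q
  | FEx y p => x <> y /\ free x p
  end.

Definition sentence (S : Type) (ar : S -> nat) (phi : form ar) : Prop :=
  forall x, ~ free x phi.

(* structures of a relational language; universes are nonempty *)
Record rstruct (S : Type) (ar : S -> nat) := RStruct {
  rcar :> Type;
  rpt : rcar;
  rrel : forall s : S, ('I_(ar s) -> rcar) -> Prop
}.

Definition upd (M : Type) (e : nat -> M) (x : nat) (a : M) : nat -> M :=
  fun z => if z == x then a else e z.

Fixpoint sat (S : Type) (ar : S -> nat) (M : rstruct ar) (e : nat -> M)
    (phi : form ar) : Prop :=
  match phi with
  | FEq a b => e a = e b
  | FRel s v => @rrel _ _ M s (fun i => e (v i))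
  | FNot p => ~ @sat _ _ M e p
  | FAnd p q => @sat _ _ M e p /\ @sat _ _ M e q
  | FEx x p => exists a : M, @sat _ _ M (upd e x a) p
  end.

Definition theory (S : Type) (ar : S -> nat) := form ar -> Prop.
Definition family (S : Type) (ar : S -> nat) := theory ar -> Prop.

Definition Th (S : Type) (ar : S -> nat) (M : rstruct ar) : theory ar :=
  fun phi => sentence phi /\ @sat _ _ M (fun _ => @rpt _ _ M) phi.

Definition theq (S : Type) (ar : S -> nat) (T1 T2 : theory ar) : Prop :=
  forall phi, T1 phi <-> T2 phi.

Definition fam_restr (S : Type) (ar : S -> nat) (F : family ar) (phi : form ar)
  : family ar := fun T => F T /\ T phi.

Definition fam_nonempty (S : Type) (ar : S -> nat) (F : family ar) : Prop :=
  exists T, F T.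

(* finiteness of a family (theories identified extensionally) *)
Definition fam_finite (S : Type) (ar : S -> nat) (F : family ar) : Prop :=
  exists l : list (theory ar), forall T, F T -> exists T', In T' l /\ theq T T'.

Definition fam_infinite (S : Type) (ar : S -> nat) (F : family ar) : Prop :=
  ~ fam_finite F.

Definition inconsistent (S : Type) (ar : S -> nat) (phi psi : form ar) : Prop :=
  forall (M : rstruct ar) (e : nat -> M), ~ (@sat _ _ M e phi /\ @sat _ _ M e psi).

(* Sigma: predicate symbols P with arities arP, function symbols F with
   arities arF (constants = 0-ary function symbols). *)
Record sstruct (P F : Type) (arP : P -> nat) (arF : F -> nat) := SStruct {
  scar :> Type;
  spt : scar;
  srel : forall p : P, ('I_(arP p) -> scar) -> Prop;
  sfun : forall f : F, ('I_(arF f) -> scar) -> scar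
}.

Definition rel_ar (P F : Type) (arP : P -> nat) (arF : F -> nat) (s : P + F)
  : nat :=
  match s with inl p => arP p | inr f => (arF f).+1 end.

(* R_f is interpreted as the graph {(a, b) | f(a) = b} *)
Definition to_rstruct (P F : Type) (arP : P -> nat) (arF : F -> nat)
    (M : sstruct arP arF) : rstruct (rel_ar arP arF) :=
  @RStruct _ (rel_ar arP arF) (scar M) (spt M)
    (fun s => match s as s0 return ('I_(rel_ar arP arF s0) -> scar M) -> Prop with
      | inl p => fun v => @srel _ _ _ _ M p v
      | inr f => fun v =>
          @sfun _ _ _ _ M f (fun i => v (widen_ord (leqnSn (arF f)) i)) = v ord_max
      end).

Definition T_Sigma (P F : Type) (arP : P -> nat) (arF : F -> nat)
  : family (rel_ar arP arF) :=
  fun T => exists M : sstruct arP arF, theq T (Th (to_rstruct M)).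

(* Ordinals are represented by elements of well-orders: "for every ordinal
   alpha" = for every well-ordered type W and every a : W. *)
Definition well_order (W : Type) (lt : W -> W -> Prop) : Prop :=
  well_founded lt /\
  (forall x, ~ lt x x) /\
  (forall x y z, lt x y -> lt y z -> lt x z) /\
  (forall x y, lt x y \/ x = y \/ lt y x).

Definition is_succ (W : Type) (lt : W -> W -> Prop) (b a : W) : Prop :=
  lt b a /\ forall c, lt b c -> ~ lt c a.

(* G a F  represents  "RS(F) >= a"; RS_spec says G satisfies the defining
   recursion of RS (which determines G uniquely by well-founded induction). *)
Definition RS_spec (S : Type) (ar : S -> nat) (W : Type) (lt : W -> W -> Prop)
    (G : W -> family ar -> Prop) : Prop :=
  (* alpha = 0 : RS(F) >= 0 iff F nonempty (RS(empty) = -1) *)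
  (forall a F, (forall b, ~ lt b a) -> (G a F <-> fam_nonempty F)) /\
  (* alpha = 1 : RS(F) >= 1 iff F infinite *)
  (forall a b F, is_succ lt b a -> (forall c, ~ lt c b) ->
     (G a F <-> fam_infinite F)) /\
  (* alpha = beta + 1, beta >= 1 *)
  (forall a b F, is_succ lt b a -> (exists c, lt c b) ->
     (G a F <->
      exists phis : nat -> form ar,
        (forall n, sentence (phis n)) /\
        (forall n m, n <> m -> inconsistent (phis n) (phis m)) /\
        (forall n, G b (fam_restr F (phis n))))) /\
  (* alpha limit *)
  (forall a F, (exists b, lt b a) -> (forall b, ~ is_succ lt b a) ->
     (G a F <-> forall b, lt b a -> G b F)).

Definition RS_infty (S : Type) (ar : S -> nat) (F : family ar) : Prop :=
  forall (W : Type) (lt : W -> W -> Prop) (G : W -> family ar -> Prop),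
    well_order lt -> @RS_spec S ar W lt G -> forall a : W, G a F.

(* Interpret the symbol as the graph of a unary map [shift q] on [nat * nat]
   which, for every [a] with [q a], turns the points [(a, a.+1), ..., (a, 0)]
   into a chain ending in the fixed point [(a, 0)] and fixes everything else.
   A first-order sentence says "some fixed point has exactly [j.+1] strict
   predecessors in a row", which holds iff [q j]; so the theories of these
   structures realise the whole Cantor tree of bit patterns [q].  Starting from
   any cylinder of patterns, the sentences "the first [1] from position [M] is
   at [M + n]" split it into infinitely many pairwise inconsistent
   subcylinders, and well-founded induction on the ordinal gives rank at least
   every ordinal. *)
From Pilot Require Import Defs.
From Stdlib Require Import List Classical.
From mathcomp Require Import all_boot.

Set Implicit Arguments.
Unset Strict Implicit.
Unset Printing Implicit Defensive.

Lemma fam_infinite_of_distinct_seq (S : Type) (ar : S -> nat)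
    (Fm : Defs.family ar) (T : nat -> theory ar) :
  (forall n, Fm (T n)) -> (forall n m, theq (T n) (T m) -> n = m) ->
  fam_infinite Fm.
Proof.
move=> FmT T_inj.
have avoid (L : list (theory ar)) :
    exists N, forall n, N <= n -> forall T', In T' L -> ~ theq (T n) T'.
  elim: L => [|T' L [N avoidL]]; first by exists 0.
  case: (classic (exists n, N <= n /\ theq (T n) T')) => [[n0 [Nn0 Tn0]]|none].
  - exists n0.+1 => n n0n T'' [<-|LT''] Tn.
    + have /T_inj en : theq (T n) (T n0).
        by move=> phi; split=> ?; [apply/Tn0/Tn | apply/Tn/Tn0].
      by move: n0n; rewrite en ltnn.
    + exact: avoidL n (leq_trans Nn0 (ltnW n0n)) T'' LT'' Tn.
  - exists N => n Nn T'' [<-|LT''] Tn; last exact: avoidL n Nn T'' LT'' Tn.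
    by apply: none; exists n.
move=> [L coverL].
have [N avoidL] := avoid L.
have [T' [LT' TNT']] := coverL _ (FmT N).
exact: avoidL N (leqnn N) T' LT' TNT'.
Qed.

Section BitModels.
Variables (S : Type) (ar : S -> nat) (bit : nat -> form ar).

Fixpoint first_one_from (M n : nat) : form ar :=
  match n with
  | 0 => bit M
  | n.+1 => FAnd (FNot (bit M)) (first_one_from M.+1 n)
  end.

Lemma first_one_from_inconsistent M n m :
  n <> m -> inconsistent (first_one_from M n) (first_one_from M m).
Proof.
elim: n m M => [|n IHn] [|m] M // nm Mo e /=.
- by move=> [bitM [nbitM _]].
- by move=> [[nbitM _] bitM].
- move=> [[_ satn] [_ satm]].
  by apply: (IHn m M.+1 _ Mo e) => // en; apply: nm; rewrite en.
Qed.

Hypothesis bit_sentence : forall j, sentence (bit j).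

Lemma first_one_from_sentence M n : sentence (first_one_from M n).
Proof.
elim: n M => [|n IHn] M x; first exact: bit_sentence.
by move=> [/bit_sentence | /IHn].
Qed.

Variable Mod : (nat -> bool) -> rstruct ar.
Hypothesis Mod_bit : forall q j, sat (fun _ => rpt (Mod q)) (bit j) <-> q j.

Lemma sat_first_one_from q M n :
  (forall k, M <= k <= M + n -> q k = (k == M + n)) ->
  sat (fun _ => rpt (Mod q)) (first_one_from M n).
Proof.
elim: n M => [|n IHn] M qMn /=.
  by apply/Mod_bit; rewrite qMn addn0 ?leqnn.
split.
  by move/Mod_bit; rewrite qMn ?leqnn ?leq_addr // -{1}[M]addn0 eqn_add2l.
by apply: IHn => k /andP[Mk kMn]; rewrite addSnnS qMn // ltnW //= -addSnnS.
Qed.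

Definition covers_cylinder (Fm : Defs.family ar) (M : nat) : Prop :=
  exists p : nat -> bool, forall q : nat -> bool,
    (forall k, k < M -> q k = p k) -> Fm (Th (Mod q)).

Definition first_one_at (p : nat -> bool) (M n : nat) : nat -> bool :=
  fun k => if k < M then p k else k == M + n.

Lemma covers_cylinder_restr Fm M n :
  covers_cylinder Fm M ->
  covers_cylinder (fam_restr Fm (first_one_from M n)) (M + n).+1.
Proof.
move=> [p coverp]; exists (first_one_at p M n) => q q_pref; split.
  apply: coverp => k kM; rewrite q_pref /first_one_at ?kM //.
  by rewrite ltnS (leq_trans (ltnW kM)) ?leq_addr.
split; first exact: first_one_from_sentence.
apply: sat_first_one_from => k /andP[Mk kMn].
by rewrite q_pref ?ltnS // /first_one_at ltnNge Mk.
Qed.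

Lemma covers_cylinder_infinite Fm M : covers_cylinder Fm M -> fam_infinite Fm.
Proof.
move=> [p coverp].
have first_one n : Th (Mod (first_one_at p M n)) (first_one_from M n).
  split; first exact: first_one_from_sentence.
  apply: sat_first_one_from => k /andP[Mk _].
  by rewrite /first_one_at ltnNge Mk.
apply: (fam_infinite_of_distinct_seq
          (T := fun n => Th (Mod (first_one_at p M n)))).
  by move=> n; apply: coverp => k kM; rewrite /first_one_at kM.
move=> n m /(_ (first_one_from M n)) [/(_ (first_one n)) [_ satn] _].
apply: NNPP => nm; apply: (first_one_from_inconsistent nm).
by split; [exact: satn | case: (first_one m)].
Qed.

Lemma RS_ge_of_covers_cylinder (W : Type) (lt : W -> W -> Prop)
    (G : W -> Defs.family ar -> Prop) :
  well_order lt -> RS_spec lt G ->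
  forall a Fm M, covers_cylinder Fm M -> G a Fm.
Proof.
move=> [lt_wf _] [RS0 [RS1 [RS_succ RS_lim]]] a.
elim/(well_founded_ind lt_wf): a => a IHa Fm M coverFm.
case: (classic (exists b, lt b a)) => [a_pos|a_min]; last first.
  apply/RS0; first by move=> b ba; apply: a_min; exists b.
  by have [p coverp] := coverFm; exists (Th (Mod p)); apply: coverp.
case: (classic (exists b, is_succ lt b a)) => [[b ba]|a_lim]; last first.
  apply/RS_lim => // [b ba|b ba]; first by apply: a_lim; exists b.
  exact: IHa coverFm.
case: (classic (exists c, lt c b)) => [b_pos|b_min]; last first.
  apply/(RS1 a b) => // [c cb|]; first by apply: b_min; exists c.
  exact: covers_cylinder_infinite coverFm.
apply/(RS_succ a b) => //; exists (first_one_from M); split.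
  by move=> n; exact: first_one_from_sentence.
split; first by move=> n m; exact: first_one_from_inconsistent.
move=> n; apply: IHa (proj1 ba) _ _ (covers_cylinder_restr n coverFm).
Qed.

Lemma RS_infty_of_bit_models (Fm : Defs.family ar) :
  (forall q, Fm (Th (Mod q))) -> RS_infty Fm.
Proof.
move=> FmMod W lt G lt_wo RS_G a.
by apply: (RS_ge_of_covers_cylinder lt_wo RS_G a (M := 0)); exists predT.
Qed.

End BitModels.

Fixpoint pre_chain (X : Type) (g : X -> X) (n : nat) (z : X) : Prop :=
  match n with
  | 0 => True
  | n.+1 => exists y, g y = z /\ g y <> y /\ pre_chain g n y
  end.

Section GraphFormulas.
Variables (S : Type) (ar : S -> nat) (s : S).

(* [s(v_x, v_y, ..., v_y)]; it reads [g v_x = v_y] when [s] is a binary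
   relation or the graph [R_f] of a function symbol acting through its first
   argument. *)
Definition graph_atom (x y : nat) : form ar :=
  FRel s (fun i => if i == 0 :> nat then x else y).

Fixpoint pre_chain_form (n k : nat) : form ar :=
  match n with
  | 0 => FEq k k
  | n.+1 => FEx k.+1 (FAnd (graph_atom k.+1 k)
              (FAnd (FNot (graph_atom k.+1 k.+1)) (pre_chain_form n k.+1)))
  end.

Definition fixpoint_depth (j : nat) : form ar :=
  FEx 0 (FAnd (graph_atom 0 0)
          (FAnd (pre_chain_form j 0) (FNot (pre_chain_form j.+1 0)))).

Lemma free_graph_atom x a b : free x (graph_atom a b) -> x = a \/ x = b.
Proof. by move=> [i]; case: (_ == 0) => <-; [left | right]. Qed.

Lemma free_pre_chain_form x n k : free x (pre_chain_form n k) -> x = k.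
Proof.
elim: n k => [|n IHn] k /=; first by case.
move=> [xk [/free_graph_atom|[/free_graph_atom|/IHn]]] //; by case.
Qed.

Lemma fixpoint_depth_sentence j : sentence (fixpoint_depth j).
Proof.
move=> x [x0 [/free_graph_atom [] // | [/free_pre_chain_form // | ]]].
by move/(@free_pre_chain_form x j.+1 0).
Qed.

Variables (Mo : rstruct ar) (g : Mo -> Mo).
Hypothesis sat_graph_atom :
  forall e x y, sat e (graph_atom x y) <-> g (e x) = e y.

Lemma sat_pre_chain_form n k (e : nat -> Mo) :
  sat e (pre_chain_form n k) <-> pre_chain g n (e k).
Proof.
elim: n k e => [|n IHn] k e; first by [].
have upd_new a : upd e k.+1 a k.+1 = a by rewrite /upd eqxx.
have upd_old a : upd e k.+1 a k = e k by rewrite /upd (ltn_eqF (ltnSn k)).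
split.
- move=> [a [/sat_graph_atom gak [ngaa /IHn chain_a]]]; exists a.
  rewrite upd_new upd_old in gak chain_a; do !split=> //.
  by move=> gaa; apply: ngaa; apply/sat_graph_atom; rewrite upd_new.
- move=> [a [gak [ngaa chain_a]]]; exists a; split.
    by apply/sat_graph_atom; rewrite upd_new upd_old.
  split; last by apply/IHn; rewrite upd_new.
  by move/sat_graph_atom; rewrite upd_new.
Qed.

Lemma sat_fixpoint_depth j (e : nat -> Mo) :
  sat e (fixpoint_depth j) <->
  exists z, g z = z /\ pre_chain g j z /\ ~ pre_chain g j.+1 z.
Proof.
have upd_new a : upd e 0 a 0 = a by rewrite /upd eqxx.
split.
- move=> [z [/sat_graph_atom gz [/sat_pre_chain_form chain_z nchain_z]]].
  exists z; rewrite upd_new in gz chain_z; do !split=> //.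
  move=> chain_z'; apply: nchain_z.
  by apply/(sat_pre_chain_form j.+1 0); rewrite upd_new.
- move=> [z [gz [chain_z nchain_z]]]; exists z; split.
    by apply/sat_graph_atom; rewrite upd_new.
  split; first by apply/sat_pre_chain_form; rewrite upd_new.
  by move/(sat_pre_chain_form j.+1 0); rewrite upd_new.
Qed.

End GraphFormulas.

Arguments graph_atom {S ar} s x y.
Arguments fixpoint_depth {S ar} s j.

Definition shift (q : nat -> bool) (z : nat * nat) : nat * nat :=
  if q z.1 && (z.2 <= z.1.+1) then (z.1, z.2.-1) else z.

Lemma pre_chain_shift q n a i :
  pre_chain (shift q) n (a, i) <-> n = 0 \/ q a /\ i + n <= a.+1.
Proof.
elim: n i => [|n IHn] i; first by split=> // _; left.
split.
- move=> [[b i'] [shift_bi [moved chain]]]; rewrite /shift /= in shift_bi moved.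
  case: i' => [|i'] in shift_bi moved chain *.
    by move: moved; case: ifP => _ /(_ erefl).
  move: shift_bi moved; case: ifP => [/andP[qb i'b] [eb ei] _ | _ _ []//].
  subst a i.
  have [-> | [_ chain_len]] := (IHn _).1 chain; right; split=> //.
    by rewrite addn1.
  by rewrite addnS -addSn.
- move=> [//|[qa ina]]; exists (a, i.+1); rewrite {1 2}/shift /= qa.
  rewrite (leq_trans _ ina) ?addnS ?ltnS ?leq_addr //=.
  split=> //; split; first by case=> /eqP; rewrite (ltn_eqF (ltnSn i)).
  by apply/IHn; right; rewrite addSnnS.
Qed.

Lemma fixpoint_depth_shift q j :
  (exists z, shift q z = z /\ pre_chain (shift q) j.+1 z /\
             ~ pre_chain (shift q) j.+2 z) <-> q j.
Proof.
split.
- move=> [[a i] [fixed [/pre_chain_shift [//|[qa ija]] not_longer]]].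
  have i0 : i = 0.
    move: fixed; rewrite /shift /= qa (leq_trans (leq_addr _ _) ija).
    by case: i {ija not_longer} => // i [] /eqP; rewrite (ltn_eqF (ltnSn i)).
  have ja : j <= a by rewrite i0 add0n ltnS in ija.
  suff -> : j = a by [].
  apply/eqP; rewrite eqn_leq ja leqNgt; apply/negP => ja'.
  by apply: not_longer; apply/pre_chain_shift; right; rewrite i0 add0n.
- move=> qj; exists (j, 0); split; first by rewrite /shift; case: ifP.
  split; first by apply/pre_chain_shift; right; rewrite add0n.
  by move/pre_chain_shift => [//|[_]]; rewrite add0n ltnn.
Qed.

Definition nth_arg (X : Type) (n : nat) (x0 : X) (v : 'I_n -> X) (k : nat) :
    X :=
  oapp v x0 (insub k).

Lemma nth_argE (X : Type) (n : nat) (x0 : X) (v : 'I_n -> X) k (kn : k < n) :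
  nth_arg x0 v k = v (Ordinal kn).
Proof. by rewrite /nth_arg insubT. Qed.

Section ShiftModel.
Variables (P F : Type) (arP : P -> nat) (arF : F -> nat).

Definition shift_sstruct (q : nat -> bool) : sstruct arP arF :=
  @SStruct _ _ arP arF (nat * nat) (0, 0)
    (fun _ v => shift q (nth_arg (0, 0) v 0) = nth_arg (0, 0) v 1)
    (fun _ v => shift q (nth_arg (0, 0) v 0)).

Definition shift_model (q : nat -> bool) := to_rstruct (shift_sstruct q).

Lemma sat_graph_atom_pred (p : P) : 1 < arP p ->
  forall q (e : nat -> nat * nat) x y,
  @sat _ _ (shift_model q) e (graph_atom (inl p) x y) <-> shift q (e x) = e y.
Proof.
move=> p2 q e x y; have p1 : 0 < arP p by exact: ltnW.
by rewrite /= (nth_argE _ _ p1) (nth_argE _ _ p2).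
Qed.

Lemma sat_graph_atom_fun (f : F) : 0 < arF f ->
  forall q (e : nat -> nat * nat) x y,
  @sat _ _ (shift_model q) e (graph_atom (inr f) x y) <-> shift q (e x) = e y.
Proof.
by move=> f1 q e x y; rewrite /= (nth_argE _ _ f1) [arF f == 0]eqn0Ngt f1.
Qed.

End ShiftModel.

Theorem proposition2p6 (P F : Type) (arP : P -> nat) (arF : F -> nat) :
  ((exists p : P, 2 <= arP p) \/ (exists f : F, 1 <= arF f)) ->
  @RS_infty (P + F) (@rel_ar P F arP arF) (@T_Sigma P F arP arF).
Proof.
move=> big_symbol.
have [s sat_s] : exists s : P + F, forall q (e : nat -> nat * nat) x y,
    @sat _ _ (shift_model arP arF q) e (graph_atom s x y) <->
    shift q (e x) = e y.
  case: big_symbol => [[p p2] | [f f1]].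
  - by exists (inl p); exact: sat_graph_atom_pred.
  - by exists (inr f); exact: sat_graph_atom_fun.
apply: (@RS_infty_of_bit_models _ _ (fun j => fixpoint_depth s j.+1) _
          (shift_model arP arF)).
- by move=> j; exact: fixpoint_depth_sentence.
- move=> q j; apply: iff_trans (fixpoint_depth_shift q j).
  exact: (sat_fixpoint_depth (Mo := shift_model arP arF q) (sat_s q)).
- by move=> q; exists (shift_sstruct arP arF q).
Qed.
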